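(* Fix an agent $k$ and coefficients $W_{i,j}\in[-1,1]$, $i,j\in[m_k]$, and suppose there are $\varepsilon'\ge\varepsilon''\ge0$ with $W_{i,i}\ge\max\{W_{i,j}-\varepsilon',-\varepsilon''\}$ for all $i,j$. Let $\hat q^*$ be any optimal solution of $(P^4)$. Then $\hat q^*$ is also an optimal solution of $(P^3)$. Moreover, if $(\hat\lambda^*,\hat\mu^*,\hat\pi^* )$ are Lagrange multipliers satisfying the KKT conditions of $(P^4)$ at $\hat q^*$, then there exists $\lambda^*=(\lambda^*_{i,j})_{i,j}$ such that $(\lambda^*,\mu^*=\hat\mu^*,\pi^*=\hat\pi^* )$ satisfies the KKT conditions of $(P^3)$ at $q^*=\hat q^*$.
   Context: Agent $k$ has finite type support $\{t_k^{(1)},\dots,t_k^{(m_k)}\}$ with probabilities $F_i>0$; $m=\max_{k'}m_{k'}$. With $\gamma>0$ and $\phi(\mathbf{q})=\frac12\gamma\|\mathbf{q}\|_2^2$: program $(P^3)$ maximizes $\sum_iF_i(\sum_jW_{i,j}q_{i,j}-\phi(\mathbf{q}_i))$ subject to $\sum_jq_{i,j}=1$ ($\forall i$), $\sum_iF_iq_{i,j}=F_j$ ($\forall j$), $q_{i,j}\ge0$. Program $(P^4)$ is the same with $W_{i,j}$ replaced by $\hat W_{i,j}=W_{i,j}$ if $W_{i,j}\ge-m(\varepsilon'+2\gamma)-\varepsilon''$ and $\hat W_{i,j}=-m(\varepsilon'+2\gamma)-\varepsilon''$ otherwise. KKT conditions of a program with coefficients $V_{i,j}$ (either $W$ or $\hat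 W$) at solution $q$ with multipliers $(\lambda,\mu,\pi)$: (1) $F_i(V_{i,j}-\partial\phi(\mathbf{q}_i)/\partial q_{i,j})=\lambda_{i,j}+\mu_i+F_i\pi_j$; (2) $\lambda_{i,j}\le0$; (3) $\lambda_{i,j}q_{i,j}=0$, for all $i,j$. *)

From HB Require Import structures.
From mathcomp Require Import all_boot all_order all_algebra.
Set Implicit Arguments. Unset Strict Implicit. Unset Printing Implicit Defensive.
Import Order.TTheory GRing.Theory Num.Theory.
Local Open Scope ring_scope.

Section Defs.
Variables (R : realFieldType) (n : nat).

Definition phi (gamma : R) (qi : 'I_n -> R) : R :=
  gamma / 2%:R * \sum_(j < n) qi j ^+ 2.

Definition dphi (gamma : R) (qi : 'I_n -> R) (j : 'I_n) : R := gamma * qi j.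

Definition feasible (F : 'I_n -> R) (q : 'I_n -> 'I_n -> R) : Prop :=
  [/\ forall i, \sum_(j < n) q i j = 1,
      forall j, \sum_(i < n) F i * q i j = F j
    & forall i j, 0 <= q i j].

Definition objective (gamma : R) (F : 'I_n -> R) (V : 'I_n -> 'I_n -> R)
  (q : 'I_n -> 'I_n -> R) : R :=
  \sum_(i < n) F i * (\sum_(j < n) V i j * q i j - phi gamma (q i)).

Definition optimal (gamma : R) (F : 'I_n -> R) (V : 'I_n -> 'I_n -> R)
  (q : 'I_n -> 'I_n -> R) : Prop :=
  feasible F q /\
  forall q', feasible F q' -> objective gamma F V q' <= objective gamma F V q.

Definition What (m : nat) (eps1 eps2 gamma : R) (W : 'I_n -> 'I_n -> R)
  (i j : 'I_n) : R :=
  let c := - (m%:R * (eps1 + 2%:R * gamma)) - eps2 in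
  if c <= W i j then W i j else c.

Definition KKT (gamma : R) (F : 'I_n -> R) (V : 'I_n -> 'I_n -> R)
  (q : 'I_n -> 'I_n -> R) (lam : 'I_n -> 'I_n -> R) (mu pi : 'I_n -> R) : Prop :=
  forall i j,
    [/\ F i * (V i j - dphi gamma (q i) j) = lam i j + mu i + F i * pi j,
        lam i j <= 0
      & lam i j * q i j = 0].

End Defs.

From HB Require Import structures.
From mathcomp Require Import all_boot all_order all_algebra.
From mathcomp Require Import ring lra.
Set Implicit Arguments.
Unset Strict Implicit.
Unset Printing Implicit Defensive.
Import Order.TTheory GRing.Theory Num.Theory.
Local Open Scope ring_scope.

(* If an optimal solution of (P^4) put positive mass on an entry (i, j) whose
   coefficient was truncated, the marginal constraint F q = F would close the
   support edge i -> j into a cycle.  Moving a little mass along that cycle back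
   to the diagonal improves the objective: the truncated entry alone gains
   about m (eps1 + 2 gamma), more than the at most m entries of the cycle can
   lose.  Hence an optimal solution of (P^4) vanishes wherever \hat W differs
   from W; as W <= \hat W, it is optimal for (P^3), and the KKT multipliers
   carry over with lambda := \hat lambda + F_i (W - \hat W). *)

Section ShiftDirection.
Context {R : pzRingType} {n : nat}.

Definition shift_dir (a s b : 'I_n) : R := (b == a)%:R - (b == s)%:R.

Lemma sum_mul_delta (r : 'I_n -> R) a : \sum_b r b * (b == a)%:R = r a.
Proof.
by under eq_bigr do rewrite mulr_natr mulrb; rewrite -big_mkcond big_pred1_eq.
Qed.

Lemma sum_mul_shift_dir (r : 'I_n -> R) a s :
  \sum_b r b * shift_dir a s b = r a - r s.
Proof.
by under eq_bigr do rewrite mulrBr; rewrite sumrB !sum_mul_delta.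
Qed.

Lemma sum_shift_dir a s : \sum_b shift_dir a s b = 0.
Proof.
have := sum_mul_shift_dir (fun=> 1) a s.
by under eq_bigr do rewrite mul1r; rewrite subrr.
Qed.

Lemma sum_shift_dir_sqr a s : a != s -> \sum_b shift_dir a s b ^+ 2 = 2%:R.
Proof.
move=> nas; under eq_bigr do rewrite expr2.
rewrite sum_mul_shift_dir /shift_dir !eqxx [s == a]eq_sym (negbTE nas).
by rewrite subr0 sub0r opprK.
Qed.

End ShiftDirection.

Lemma shift_row_value (R : realFieldType) (n : nat) (gamma f t : R)
    (v x : 'I_n -> R) a s :
  f != 0 -> a != s ->
  let x' b := x b + t / f * shift_dir a s b in
  f * (\sum_b v b * x' b - phi gamma x') =
  f * (\sum_b v b * x b - phi gamma x)
  + t * (v a - v s - gamma * (x a - x s)) - gamma * t ^+ 2 / f.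
Proof.
move=> f0 nas x'; set u := t / f.
have lin : \sum_b v b * x' b = \sum_b v b * x b + u * (v a - v s).
  rewrite -sum_mul_shift_dir mulr_sumr -big_split.
  by apply: eq_bigr => b _ /=; rewrite /x' /u; ring.
have sq : \sum_b x' b ^+ 2 =
          \sum_b x b ^+ 2 + 2%:R * u * (x a - x s) + u ^+ 2 * 2%:R.
  rewrite -sum_mul_shift_dir -[X in u ^+ 2 * X](sum_shift_dir_sqr nas).
  rewrite !mulr_sumr -!big_split.
  by apply: eq_bigr => b _ /=; rewrite /x' /u; ring.
by rewrite /phi lin sq /u; field.
Qed.

Section SupportGraph.
Variables (R : realFieldType) (n : nat) (F : 'I_n -> R).
Hypothesis F_gt0 : forall i, 0 < F i.

Definition support_rel (q : 'I_n -> 'I_n -> R) : rel 'I_n :=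
  fun a b => (a != b) && (0 < q a b).

Lemma feasible_le1 q a b : feasible F q -> q a b <= 1.
Proof.
by case=> rows _ q_ge0; rewrite -(rows a) (bigD1 b) //= lerDl sumr_ge0.
Qed.

(* The F-weighted mass leaving S equals the mass entering S, since F is both
   the row weight and the column marginal. *)
Lemma feasible_no_inflow q (S : {set 'I_n}) : feasible F q ->
  (forall a b, a \in S -> b \notin S -> q a b = 0) ->
  forall a b, a \notin S -> b \in S -> q a b = 0.
Proof.
move=> [rows cols q_ge0] no_out a b aS bS.
have Fq_ge0 x y : 0 <= F x * q x y := mulr_ge0 (ltW (F_gt0 x)) (q_ge0 x y).
have out_mass : \sum_(x in S) F x = \sum_(x in S) \sum_(y in S) F x * q x y.
  apply: eq_bigr => x xS; rewrite -[LHS]mulr1 -(rows x) mulr_sumr.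
  rewrite (bigID (mem S)) /= [X in _ + X]big1 ?addr0 // => y yS.
  by rewrite no_out ?mulr0.
have in_mass : \sum_(y in S) F y =
    \sum_(y in S) \sum_(x in S) F x * q x y
    + \sum_(y in S) \sum_(x | x \notin S) F x * q x y.
  by rewrite -big_split; apply: eq_bigr => y _; rewrite -cols (bigID (mem S)).
have inflow0 : \sum_(y in S) \sum_(x | x \notin S) F x * q x y = 0.
  by move: in_mass; rewrite out_mass exchange_big /= => h; lra.
have inb := psumr_eq0P (fun y _ => sumr_ge0 _ (fun x _ => Fq_ge0 x y)) inflow0.
have /eqP := psumr_eq0P (fun x _ => Fq_ge0 x b) (inb b bS) aS.
by rewrite mulf_eq0 gt_eqF //= => /eqP.
Qed.

Lemma feasible_support_connect q i j : feasible F q -> 0 < q i j ->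
  connect (support_rel q) j i.
Proof.
move=> feas qij; have [_ _ q_ge0] := feas.
set S := [set a | connect (support_rel q) j a].
apply/negPn/negP => ij; move: qij; rewrite (@feasible_no_inflow q S) ?ltxx //.
- move=> a b; rewrite !inE => ja; apply: contraNeq => qab.
  case: (eqVneq a b) => [<- //|nab]; apply: connect_trans ja (connect1 _).
  by rewrite /support_rel nab lt_def qab q_ge0.
- by rewrite inE.
- by rewrite inE connect0.
Qed.

Lemma support_cycle_through q i j : feasible F q -> i != j -> 0 < q i j ->
  exists c, [/\ uniq c, cycle (support_rel q) c, i \in c & next c i = j].
Proof.
move=> feas nij qij.
case/connectP: (feasible_support_connect feas qij) => p.
case/shortenP=> p' path_p' uniq_p' _ i_last; subst i.
exists (j :: p'); split => //.
- by rewrite /= rcons_path path_p' /support_rel nij qij.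
- exact: mem_last.
- by rewrite next_nth mem_last (index_last uniq_p') /= nth_default.
Qed.

End SupportGraph.

Section CycleShift.
Variables (R : realFieldType) (n : nat) (gamma : R) (F : 'I_n -> R).
Hypothesis F_gt0 : forall i, 0 < F i.

(* Weighted by [F], column [b] gains [t] in row [b] and loses [t] in
   row [prev c b], so the column marginals are preserved. *)
Definition cycle_shift (c : seq 'I_n) (t : R) (q : 'I_n -> 'I_n -> R) a :=
  if a \in c then fun b => q a b + t / F a * shift_dir a (next c a) b else q a.

Definition cycle_gain (V q : 'I_n -> 'I_n -> R) (c : seq 'I_n) : R :=
  \sum_(a in c) (V a a - V a (next c a) - gamma * (q a a - q a (next c a))).

Lemma feasible_cycle_shift q c t : feasible F q -> uniq c -> 0 <= t ->
  (forall a, a \in c -> t <= F a * q a (next c a)) ->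
  feasible F (cycle_shift c t q).
Proof.
move=> [rows cols q_ge0] uc t_ge0 t_le; rewrite /cycle_shift; split.
- move=> a; case: ifP => // _.
  by rewrite big_split /= rows -mulr_sumr sum_shift_dir mulr0 addr0.
- move=> b; transitivity (\sum_a F a * q a b
      + \sum_(a in c) t * shift_dir a (next c a) b).
    rewrite [X in _ = _ + X]big_mkcond -big_split; apply: eq_bigr => a _ /=.
    case: ifP => _; last by rewrite addr0.
    by field; rewrite gt_eqF.
  rewrite cols -mulr_sumr /shift_dir sumrB.
  rewrite [X in _ - X](reindex_inj (can_inj (next_prev uc))) /=.
  rewrite [X in _ - X](eq_big [in c] (fun j => (b == j)%:R)) => [|j|j _].
  + by rewrite subrr mulr0 addr0.
  + exact: mem_prev.
  + by rewrite next_prev.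
- move=> a b; case: ifP => ac //=; rewrite /shift_dir.
  apply: le_trans (_ : q a b - t / F a * (b == next c a)%:R <= _).
    case: eqP => [-> | _]; last by rewrite mulr0 subr0.
    by rewrite mulr1 subr_ge0 ler_pdivrMr // mulrC t_le.
  by rewrite mulrBr addrA lerD2r lerDl mulr_ge0 ?divr_ge0 // ltW.
Qed.

Lemma objective_cycle_shift V q c t : {in c, forall a, a != next c a} ->
  objective gamma F V (cycle_shift c t q) =
  objective gamma F V q + t * cycle_gain V q c
  - t ^+ 2 * (gamma * \sum_(a in c) (F a)^-1).
Proof.
move=> c_next; rewrite /objective /cycle_shift.
transitivity (\sum_a (F a * (\sum_b V a b * q a b - phi gamma (q a)) +
  (if a \in c
   then t * (V a a - V a (next c a) - gamma * (q a a - q a (next c a)))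
        - gamma * t ^+ 2 / F a
   else 0))).
  apply: eq_bigr => a _; case: ifP => ac; last by rewrite addr0.
  by rewrite shift_row_value ?addrA ?c_next // (gt_eqF (F_gt0 a)).
rewrite big_split -big_mkcond /= sumrB /cycle_gain addrA !mulr_sumr.
by congr (_ + _ - _); apply: eq_bigr => a _; ring.
Qed.

Lemma cycle_gain_gt0_improvable V q c : 0 <= gamma -> feasible F q -> uniq c ->
  cycle (support_rel q) c -> 0 < cycle_gain V q c ->
  exists2 q', feasible F q' & objective gamma F V q < objective gamma F V q'.
Proof.
move=> gamma_ge0 feas uc cyc gain_gt0.
have c_edge a : a \in c -> a != next c a /\ 0 < q a (next c a).
  by move=> ac; apply/andP; exact: next_cycle cyc ac.
set A := cycle_gain V q c; set B := gamma * \sum_(a in c) (F a)^-1.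
have B_ge0 : 0 <= B.
  by rewrite mulr_ge0 // sumr_ge0 // => a _; rewrite invr_ge0 ltW.
set t0 := \big[Num.min/1]_(a in c) (F a * q a (next c a)).
have t0_gt0 : 0 < t0.
  by apply/bigmin_gtP; split => // a ac; rewrite mulr_gt0 ?(c_edge a ac).2.
set t := Num.min t0 (A / (B + 1)).
have t_gt0 : 0 < t by rewrite lt_min t0_gt0 divr_gt0 //; lra.
have tA : t * (B + 1) <= A.
  by rewrite -ler_pdivlMr ?ge_min ?lexx ?orbT //; lra.
exists (cycle_shift c t q).
  apply: feasible_cycle_shift; rewrite ?ltW // => a ac.
  by rewrite ge_min (bigmin_le_cond _ _ ac).
rewrite objective_cycle_shift => [|a ac]; last exact: (c_edge a ac).1.
rewrite -/A -/B -addrA ltrDl; nra.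
Qed.

End CycleShift.

Section CoefficientTransfer.
Variables (R : realFieldType) (n : nat) (gamma : R) (F : 'I_n -> R).
Variables (V V' q : 'I_n -> 'I_n -> R).
Hypotheses (F_gt0 : forall i, 0 < F i) (le_V'V : forall i j, V' i j <= V i j).
Hypothesis eq_on_q : forall i j, V' i j * q i j = V i j * q i j.

Lemma objective_le_coef q' : feasible F q' ->
  objective gamma F V' q' <= objective gamma F V q'.
Proof.
move=> [_ _ q'_ge0]; apply: ler_sum => a _; apply: ler_wpM2l; first exact: ltW.
by rewrite lerD2r; apply: ler_sum => b _; exact: ler_wpM2r.
Qed.

Lemma objective_eq_coef : objective gamma F V' q = objective gamma F V q.
Proof.
apply: eq_bigr => a _; congr (_ * (_ - _)); exact: eq_bigr.
Qed.

Lemma optimal_le_coef : optimal gamma F V q -> optimal gamma F V' q.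
Proof.
move=> [feas opt]; split=> // q' feas'.
by rewrite objective_eq_coef (le_trans (objective_le_coef feas')) ?opt.
Qed.

Lemma KKT_le_coef lam mu pi : KKT gamma F V q lam mu pi ->
  KKT gamma F V' q (fun i j => lam i j + F i * (V' i j - V i j)) mu pi.
Proof.
move=> kkt i j; have [stat lam_le0 compl] := kkt i j; split.
- transitivity (F i * (V i j - dphi gamma (q i) j) + F i * (V' i j - V i j)).
    by rewrite /dphi; ring.
  by rewrite stat; ring.
- have : F i * (V' i j - V i j) <= 0.
    by apply: mulr_ge0_le0; [exact: ltW | rewrite subr_le0].
  by move: lam_le0; lra.
- by rewrite mulrDl compl add0r -mulrA mulrBl eq_on_q subrr mulr0.
Qed.

End CoefficientTransfer.

Section Truncation.
Variables (R : realFieldType) (n m : nat) (F : 'I_n -> R).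
Variables (W : 'I_n -> 'I_n -> R) (gamma eps1 eps2 : R).
Hypotheses (gamma_gt0 : 0 < gamma) (F_gt0 : forall i, 0 < F i).
Hypotheses (n_le_m : (n <= m)%N) (eps2_ge0 : 0 <= eps2).
Hypothesis eps2_le_eps1 : eps2 <= eps1.
Hypothesis W_diag : forall i j, W i j - eps1 <= W i i /\ - eps2 <= W i i.

Let eps1_ge0 : 0 <= eps1 := le_trans eps2_ge0 eps2_le_eps1.

Local Notation Wh := (What m eps1 eps2 gamma W).
Local Notation thr := (- (m%:R * (eps1 + 2%:R * gamma)) - eps2).

Lemma le_What i j : W i j <= Wh i j.
Proof. by rewrite /What /=; case: (leP thr (W i j)) => // /ltW. Qed.

Lemma What_lt i j : W i j < thr -> Wh i j = thr.
Proof. by rewrite /What /= ltNge => /negbTE ->. Qed.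

Lemma thr_le_diag i : thr <= W i i.
Proof.
apply: le_trans (W_diag i i).2.
by rewrite gerDr oppr_le0 mulr_ge0 ?ler0n ?addr_ge0 ?mulr_ge0 ?ler0n // ltW.
Qed.

Lemma What_diag i : Wh i i = W i i.
Proof. by rewrite /What /= thr_le_diag. Qed.

Lemma What_le_diag i j : Wh i j <= W i i + eps1.
Proof.
rewrite /What /=; case: ifP => _; first by have := (W_diag i j).1; lra.
by rewrite (le_trans (thr_le_diag i)) ?lerDl.
Qed.

(* The truncated edge contributes at least [m (eps1 + 2 gamma) - gamma] to the
   gain, while each of the at most [m] edges of the cycle loses at most
   [eps1 + gamma]. *)
Lemma cycle_gain_What_gt0 q c i : feasible F q -> i \in c ->
  W i (next c i) < thr -> 0 < cycle_gain gamma Wh q c.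
Proof.
move=> feas ic Wi_lt; have [_ _ q_ge0] := feas.
set g := fun a => Wh a a - Wh a (next c a) - gamma * (q a a - q a (next c a)).
have m_gt0 : (0 < m)%N.
  exact: leq_ltn_trans (leq0n i) (leq_trans (ltn_ord i) n_le_m).
have m_gamma_gt0 : 0 < m%:R * gamma by rewrite mulr_gt0 ?ltr0n.
have e_ge0 : 0 <= eps1 + gamma := addr_ge0 eps1_ge0 (ltW gamma_gt0).
have gamma_gap a b : gamma * (q a a - q a b) <= gamma.
  rewrite ler_piMr ?(ltW gamma_gt0) //.
  by have := feasible_le1 a a feas; have := q_ge0 a b; lra.
have g_ge a : - (eps1 + gamma) <= g a.
  have := What_le_diag a (next c a); have := gamma_gap a (next c a).
  by rewrite /g What_diag; lra.
have g_i : m%:R * (eps1 + 2%:R * gamma) - gamma <= g i.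
  have := gamma_gap i (next c i); have := (W_diag i i).2.
  by rewrite /g What_diag What_lt //; lra.
have sum_ge : g i + (eps1 + gamma) <= \sum_(a in c) (g a + (eps1 + gamma)).
  rewrite (bigD1 i) //= lerDl sumr_ge0 // => a _.
  by have := g_ge a; lra.
have card_le : (eps1 + gamma) * #|c|%:R <= (eps1 + gamma) * m%:R.
  rewrite ler_wpM2l // ler_nat (leq_trans (max_card _)) //.
  by rewrite card_ord.
rewrite big_split sumr_const /= -mulr_natr in sum_ge.
have := eps1_ge0; rewrite /cycle_gain (eq_bigr g) //; lra.
Qed.

Lemma optimal_What_support qh i j : optimal gamma F Wh qh ->
  W i j < thr -> qh i j = 0.
Proof.
move=> [feas opt] Wij_lt; have [_ _ q_ge0] := feas.
apply/eqP; apply: contraT => qij_neq0.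
have qij_gt0 : 0 < qh i j by rewrite lt_def qij_neq0 q_ge0.
have nij : i != j.
  by apply: contraTneq Wij_lt => ->; rewrite -leNgt thr_le_diag.
have [c [uc cyc ic nci]] := support_cycle_through F_gt0 feas nij qij_gt0.
have gain_gt0 : 0 < cycle_gain gamma Wh qh c.
  by apply: (cycle_gain_What_gt0 feas ic); rewrite nci.
have [q' feas' better] :=
  cycle_gain_gt0_improvable F_gt0 (ltW gamma_gt0) feas uc cyc gain_gt0.
by move: (opt q' feas'); rewrite leNgt better.
Qed.

Lemma optimal_What_agree qh : optimal gamma F Wh qh ->
  forall i j, W i j * qh i j = Wh i j * qh i j.
Proof.
move=> opt i j; case: (ltP (W i j) thr) => [Wij_lt | thr_le].
  by rewrite (optimal_What_support opt Wij_lt) !mulr0.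
by rewrite /What /= thr_le.
Qed.

End Truncation.

Theorem mainTheorem12 (R : realFieldType) (n m : nat)
  (F : 'I_n -> R) (W : 'I_n -> 'I_n -> R) (gamma eps1 eps2 : R) :
  0 < gamma ->
  (forall i, 0 < F i) ->
  \sum_(i < n) F i = 1 ->
  (n <= m)%N ->
  (forall i j, -1 <= W i j <= 1) ->
  0 <= eps2 -> eps2 <= eps1 ->
  (forall i j, W i j - eps1 <= W i i /\ - eps2 <= W i i) ->
  forall qh : 'I_n -> 'I_n -> R,
    optimal gamma F (What m eps1 eps2 gamma W) qh ->
    optimal gamma F W qh /\
    (forall (lamh : 'I_n -> 'I_n -> R) (muh pih : 'I_n -> R),
        KKT gamma F (What m eps1 eps2 gamma W) qh lamh muh pih ->
        exists lam : 'I_n -> 'I_n -> R, KKT gamma F W qh lam muh pih).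
Proof.
move=> gamma_gt0 F_gt0 _ n_le_m _ eps2_ge0 eps2_le_eps1 W_diag qh opt.
have le_W := @le_What R n m W gamma eps1 eps2.
have eq_on_qh :=
  optimal_What_agree gamma_gt0 F_gt0 n_le_m eps2_ge0 eps2_le_eps1 W_diag opt.
split; first exact: optimal_le_coef F_gt0 le_W eq_on_qh opt.
move=> lamh muh pih kkt; eexists; exact (KKT_le_coef F_gt0 le_W eq_on_qh kkt).
Qed.
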